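(* Let $X$ be a linearly ordered set. For every odd $n\ge3$ there exists $b\ge n$ such that for every $b$-ary majority function $\mathrm{maj}_b:X^b\to X$ we have $\mathrm{med}_n\in\langle\{\mathrm{med}_3,\mathrm{maj}_b\}\rangle$.
   Context: A function $f:X^b\to X$ is a majority function iff $f(x_1,\dots,x_b)=x$ whenever the value $x$ occurs at least $\lceil\frac{b+1}{2}\rceil$ times among $x_1,\dots,x_b$. For odd $n$, $\mathrm{med}_n(x_1,\dots,x_n)$ is the $\frac{n+1}{2}$-th smallest entry of $(x_1,\dots,x_n)$ (counted with multiplicity) in the linear order. A clone on $X$ is a set of finitary operations containing all projections and closed under composition; $\langle\mathscr F\rangle$ is the smallest clone containing $\mathscr F$. *)

From mathcomp Require Import all_boot all_order.
Set Implicit Arguments. Unset Strict Implicit. Unset Printing Implicit Defensive.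
Import Order.TTheory.
Local Open Scope order_scope.

Section Clones.
Variables (d : Order.disp_t) (X : orderType d).

Definition op (k : nat) := ('I_k -> X) -> X.

Definition opset := forall k : nat, op k -> Prop.

Definition is_clone (C : opset) : Prop :=
  (forall (k : nat) (i : 'I_k), C k (fun x => x i)) /\
  (forall (m k : nat) (f : op m) (gs : 'I_m -> op k),
      C m f -> (forall j, C k (gs j)) -> C k (fun x => f (fun j => gs j x))).

Definition gen_clone (F : opset) : opset :=
  fun k f => forall C : opset, is_clone C -> (forall m g, F m g -> C m g) -> C k f.

Definition opset2 (m1 : nat) (f1 : op m1) (m2 : nat) (f2 : op m2) : opset :=
  fun m g => existT op m g = existT op m1 f1 \/ existT op m g = existT op m2 f2.

Definition majority (b : nat) (f : op b) : Prop :=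
  forall (x : 'I_b -> X) (a : X),
    ((b.+2)./2 <= #|[pred i | x i == a]|)%N -> f x = a.

(* medS k = med_(k+1): the ((k+2)/2)-th smallest entry (0-based index k/2,
   which for odd n = k+1 is index (n-1)/2), counted with multiplicity *)
Definition medS (k : nat) : op k.+1 :=
  fun x => nth (x ord0) (sort <=%O [seq x i | i <- enum 'I_k.+1]) k./2.

End Clones.

From mathcomp Require Import all_boot all_order all_algebra.
From mathcomp Require Import zify ring lra.
From Stdlib Require Import FunctionalExtensionality.
Set Implicit Arguments. Unset Strict Implicit. Unset Printing Implicit Defensive.
Import Order.TTheory GRing.Theory Num.Theory.

(* Apply the b-ary majority to all b complete ternary trees of depth 2n+1
   whose inner nodes are med3 and whose leaves are the n variables.  Fix an
   input and a predicate P closed downwards; the proportion p_j of trees of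
   depth j whose value satisfies P obeys p_(j+1) = 3 p_j^2 - 2 p_j^3, because a
   uniform tree of depth j+1 is a triple of independent uniform trees of depth j.
   More than half of the inputs are <= the median m, so p_0 >= 1/2 + 1/(2n);
   the excess over 1/2 grows by a factor 5/4 per step until it reaches 1/4, so
   at depth 2n+1 more than 3/4 of the trees evaluate to a value <= m.  The same
   holds for >= m, hence a strict majority of the trees evaluate to m. *)

Lemma count_map_ord (T : Type) (n : nat) (P : pred T) (x : 'I_n -> T) :
  count P [seq x i | i <- enum 'I_n] = #|[pred i | P (x i)]|.
Proof.
rewrite count_map cardE /enum_mem size_filter -enumT count_filter.
by apply: eq_count => i; rewrite !inE andbT.
Qed.

Lemma card_enum_val (T : finType) (P : pred T) :
  #|[pred i : 'I_#|T| | P (enum_val i)]| = #|P|.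
Proof.
rewrite -(card_image enum_val_inj); apply: eq_card => t.
by rewrite -[t]enum_rankK mem_image ?inE //; exact: enum_val_inj.
Qed.

Section Median.
Variables (d : Order.disp_t) (X : orderType d).
Local Open Scope order_scope.

Definition down_closed (P : pred X) := forall a b, P a -> b <= a -> P b.

Lemma nth_sorted_down_closed (P : pred X) (s : seq X) (x0 : X) (i : nat) :
  down_closed P -> sorted <=%O s -> (i < size s)%N ->
  P (nth x0 s i) = (i < count P s)%N.
Proof.
move=> dcP; elim: s i => [//|a s IH] i /= Hs Hi.
have a_le : all (>= a) s by apply: order_path_min => //; exact: le_trans.
have nPs : ~~ P a -> count P s = 0%N.
  move=> nPa; apply/eqP; rewrite -leqn0 leqNgt -has_count; apply/hasP => -[z zs Pz].
  by move/allP: a_le => /(_ z zs) az; rewrite (dcP _ _ Pz az) in nPa.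
case: i Hi => [|i] Hi /=; first by case Pa: (P a); rewrite // nPs ?Pa.
rewrite IH //; last exact: path_sorted Hs.
by case Pa: (P a); rewrite //= nPs ?Pa.
Qed.

Lemma medS_down_closed (P : pred X) (k : nat) (x : 'I_k.+1 -> X) :
  down_closed P -> P (medS x) = (k./2 < #|[pred i | P (x i)]|)%N.
Proof.
move=> dcP; rewrite /medS nth_sorted_down_closed ?sort_le_sorted //.
  by rewrite count_sort count_map_ord.
by rewrite size_sort size_map size_enum_ord ltnS -divn2 leq_div.
Qed.

Definition med3_compatible (P : pred X) :=
  forall x : 'I_3 -> X, P (medS x) = (1 < #|[pred i | P (x i)]|)%N.

Lemma down_closed_med3_compatible (P : pred X) :
  down_closed P -> med3_compatible P.
Proof. by move=> dcP x; rewrite medS_down_closed. Qed.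

Lemma med3_compatibleC (P : pred X) :
  med3_compatible P -> med3_compatible (predC P).
Proof.
move=> cP x; rewrite /= cP.
have := cardC [pred i | P (x i)]; have := max_card [pred i | P (x i)].
rewrite card_ord; set c := #|_|; set c' := #|_|; lia.
Qed.

Lemma medS_le_majority (k : nat) (x : 'I_k.+1 -> X) : odd k.+1 ->
  (k.+1 < 2 * #|[pred i | (x i <= medS x)%O]|)%N.
Proof.
move=> odd_n; have k_half : k = (k./2).*2.
  by rewrite -[LHS]odd_double_half; move: odd_n => /= /negPf ->.
have le_dc : down_closed [pred z | z <= medS x] by move=> a b /= ? /le_trans; apply.
by have := medS_down_closed x le_dc; rewrite /= lexx; lia.
Qed.

Lemma medS_ge_majority (k : nat) (x : 'I_k.+1 -> X) : odd k.+1 ->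
  (k.+1 < 2 * #|[pred i | ~~ (x i < medS x)%O]|)%N.
Proof.
move=> odd_n; have k_half : k = (k./2).*2.
  by rewrite -[LHS]odd_double_half; move: odd_n => /= /negPf ->.
have lt_dc : down_closed [pred z | z < medS x] by move=> a b /= ? /le_lt_trans; apply.
have := medS_down_closed x lt_dc; have := cardC [pred i | x i < medS x].
rewrite /= ltxx card_ord (@eq_card _ [predC _] [pred i | ~~ (x i < medS x)]) //.
(* [set] merges convertible spellings of one cardinal into a single lia atom. *)
set c' := #|[pred i | ~~ _]|; set c := #|_|.
by move=> ? /esym/negbT; rewrite -leqNgt; lia.
Qed.

Lemma card_le_nlt (T : finType) (f : T -> X) (v : X) :
  (#|[pred t | (f t <= v)%O]| + #|[pred t | ~~ (f t < v)%O]| =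
   #|T| + #|[pred t | f t == v]|)%N.
Proof.
rewrite -cardUI; congr (_ + _)%N; apply: eq_card => t; rewrite !inE -leNgt.
  by rewrite le_total.
by rewrite -eq_le.
Qed.

End Median.

Local Open Scope ring_scope.

Section MajorityAmplification.
Variable R : realFieldType.

Definition maj3_prob (p : R) := 3 * p ^+ 2 - 2 * p ^+ 3.

Lemma maj3_prob_le1 (p : R) : -1/2 <= p -> maj3_prob p <= 1.
Proof.
move=> hp; have -> : maj3_prob p = 1 - (1 - p) ^+ 2 * (1 + 2 * p) by rewrite /maj3_prob; ring.
by rewrite lerBlDr lerDl mulr_ge0 ?sqr_ge0 //; lra.
Qed.

Lemma maj3_prob_ge (e p : R) : 0 <= e <= 1/4 -> 1/2 + e <= p <= 1 ->
  1/2 + 5/4 * e <= maj3_prob p.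
Proof.
move=> /andP[e0 e1] /andP[ep p1]; rewrite /maj3_prob.
set u := p - 1/2; have -> : p = 1/2 + u by rewrite /u; ring.
have ue : e <= u by rewrite /u; lra.
have u1 : u <= 1/2 by rewrite /u; lra.
have A : 0 <= (u - e) * (3/2 - 2 * (u ^+ 2 + u * e + e ^+ 2)) by apply: mulr_ge0; nra.
have B : 5/4 * e <= e * (3/2 - 2 * e ^+ 2) by nra.
nra.
Qed.

Lemma bernoulli_5_4 (n : nat) : 1 + n%:R / 4 <= (5/4 : R) ^+ n.
Proof.
elim: n => [|n IH]; first by rewrite expr0 mul0r addr0.
rewrite exprS -natr1; have : 0 <= (n%:R : R) by []; nra.
Qed.

Lemma iter_maj3_prob_gt (N : nat) (p : R) : (0 < N)%N ->
  1/2 + 1/(2 * N%:R) <= p <= 1 -> 3/4 < iter (2 * N).+1 maj3_prob p.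
Proof.
move=> N0 /andP[p0 p1]; have Np : 0 < (N%:R : R) by rewrite ltr0n.
pose m j : R := Num.min (1/4) ((5/4) ^+ j / (2 * N%:R)).
have m_ge0 j : 0 <= m j by rewrite le_min; apply/andP; split; [lra|apply: divr_ge0; [apply: exprn_ge0|]; lra].
have m_le j : m j <= 1/4 by rewrite ge_min lexx.
have m_step j : m j.+1 <= 5/4 * m j.
  rewrite /m exprS -2!mulrA; set x := (5/4) ^+ j / _.
  by case: (lerP (1/4) x) => _; rewrite ge_min; apply/orP; [left; lra|right; rewrite mulrA].
have inv j : 1/2 + m j <= iter j maj3_prob p <= 1.
  elim: j => [|j /andP[IH1 IH2]] /=.
    by rewrite p1 andbT; apply: le_trans p0; rewrite lerD2l ge_min lexx orbT.
  have := maj3_prob_ge (e := m j) (p := iter j maj3_prob p).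
  rewrite m_ge0 m_le IH1 IH2 /= => /(_ isT isT) h.
  rewrite (le_trans _ h) ?lerD2l ?m_step // maj3_prob_le1 //.
  by have := m_ge0 j; lra.
have m2N : m (2 * N)%N = 1/4.
  apply: min_l; rewrite ler_pdivlMr; last lra.
  have := bernoulli_5_4 (2 * N); rewrite natrM; nra.
have /andP[h1 h2] := inv (2 * N)%N; rewrite m2N in h1.
have := maj3_prob_ge (e := 1/4) (p := iter (2 * N) maj3_prob p).
rewrite h1 h2 /= => /(_ ltac:(apply/andP; lra) isT) /=; lra.
Qed.

End MajorityAmplification.

Lemma sum_prod3 (R : comPzRingType) (T : finType) (f g h : T -> R) :
  \sum_(t : T * T * T) f t.1.1 * g t.1.2 * h t.2 =
  (\sum_a f a) * (\sum_a g a) * (\sum_a h a).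
Proof.
rewrite -(pair_bigA _ (fun p c => f p.1 * g p.2 * h c)) /=.
rewrite -(pair_bigA _ (fun a b => \sum_c f a * g b * h c)) /=.
rewrite !mulr_suml; apply: eq_bigr => a _.
rewrite -mulrA mulr_suml mulr_sumr; apply: eq_bigr => b _.
by rewrite !mulr_sumr; apply: eq_bigr => c _; rewrite !mulrA.
Qed.

(* Written trilinearly so that [sum_prod3] applies to each monomial. *)
Lemma maj3_indicator (a b c : bool) :
  (1 < a + b + c)%N%:R = a%:R * b%:R * 1 + a%:R * 1 * c%:R + 1 * b%:R * c%:R
    - 2 * (a%:R * b%:R * c%:R) :> rat.
Proof. by case: a; case: b; case: c. Qed.

Definition density (T : finType) (A : pred T) : rat := #|A|%:R / #|T|%:R.

Lemma card_sum_indicator (T : finType) (A : pred T) : #|A|%:R = \sum_t (A t)%:R :> rat.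
Proof.
rewrite -sum1_card natr_sum big_mkcond /=; apply: eq_bigr => t _.
by rewrite unfold_in; case: (A t).
Qed.

Lemma density_le1 (T : finType) (A : pred T) : density A <= 1.
Proof.
rewrite /density; have [->|T0] := posnP #|T|; first by rewrite invr0 mulr0.
by rewrite ler_pdivrMr ?ltr0n // mul1r ler_nat max_card.
Qed.

Lemma density_maj3 (T : finType) (f : pred T) : (0 < #|T|)%N ->
  density [pred t : T * T * T | 1 < f t.1.1 + f t.1.2 + f t.2]%N =
  maj3_prob (density f).
Proof.
move=> T0; rewrite /density !card_prod !natrM !card_sum_indicator.
under eq_bigr => t _ do rewrite inE maj3_indicator.
set F := fun a : T => ((f a)%:R : rat); set One := fun _ : T => (1 : rat).
rewrite sumrB !big_split /= -mulr_sumr.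
rewrite (sum_prod3 F F One) (sum_prod3 F One F) (sum_prod3 One F F) (sum_prod3 F F F).
rewrite /One sumr_const /maj3_prob -/(\sum_a F a).
have : (#|T|%:R : rat) != 0 by rewrite pnatr_eq0 -lt0n.
by move=> ?; field.
Qed.

Local Close Scope ring_scope.

Fixpoint tree (N j : nat) : finType :=
  if j is j'.+1 then (tree N j' * tree N j' * tree N j')%type else 'I_N.

Definition tnth3 (A : Type) (t : A * A * A) (i : 'I_3) : A :=
  if val i == 0 then t.1.1 else if val i == 1 then t.1.2 else t.2.

Lemma card_tnth3 (A : Type) (f : pred A) (t : A * A * A) :
  #|[pred i : 'I_3 | f (tnth3 t i)]| = f t.1.1 + f t.1.2 + f t.2.
Proof. by rewrite -sum1_card big_mkcond !big_ord_recr big_ord0. Qed.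

Lemma card_tree_ge (N j : nat) : N <= #|tree N j|.
Proof.
elim: j => [|j IH] /=; first by rewrite card_ord.
by rewrite !card_prod; move: IH; set c := #|tree N j|; nia.
Qed.

Section TreeEvaluation.
Variables (d : Order.disp_t) (X : orderType d) (N : nat).

Fixpoint eval_tree (j : nat) : tree N j -> ('I_N -> X) -> X :=
  match j return tree N j -> ('I_N -> X) -> X with
  | 0 => fun i x => x i
  | j'.+1 => fun t x => medS (fun i => eval_tree (tnth3 t i) x)
  end.

Lemma eval_tree_in_clone (C : opset X) :
  is_clone C -> C 3 (@medS _ X 2) -> forall j (t : tree N j), C N (eval_tree t).
Proof.
move=> [Cproj Ccomp] Cmed3; elim=> [|j IH] t /=; first exact: Cproj.
exact: (Ccomp 3 N _ (fun i => eval_tree (tnth3 t i)) Cmed3).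
Qed.

Definition tree_density (j : nat) (P : pred X) (x : 'I_N -> X) : rat :=
  density [pred t : tree N j | P (eval_tree t x)].

Lemma tree_densityS (j : nat) (P : pred X) (x : 'I_N -> X) :
  0 < N -> med3_compatible P ->
  tree_density j.+1 P x = maj3_prob (tree_density j P x).
Proof.
move=> N0 cP; rewrite /tree_density -density_maj3; last exact: leq_trans (card_tree_ge N j).
rewrite /density; congr (_%:R / _)%R; apply: eq_card => t.
by rewrite !inE /= cP (card_tnth3 (fun s => P (eval_tree s x))).
Qed.

Lemma tree_density_gt (P : pred X) (x : 'I_N -> X) :
  0 < N -> med3_compatible P -> N < 2 * #|[pred i | P (x i)]| ->
  (3/4 < tree_density (2 * N).+1 P x)%R.
Proof.
move=> N0 cP maj.
have -> : tree_density (2 * N).+1 P x = iter (2 * N).+1 (@maj3_prob _) (tree_density 0 P x).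
  by elim: (2 * N).+1 => [//|j IH]; rewrite tree_densityS // IH.
apply: iter_maj3_prob_gt => //; rewrite density_le1 andbT /tree_density /density /= card_ord.
have Np : (0 < N%:R :> rat)%R by rewrite ltr0n.
rewrite ler_pdivlMr // -(@ler_nat rat) natrM -natr1 in maj *.
have -> : ((1/2 + 1/(2 * N%:R)) * N%:R = (N%:R + 1) / 2 :> rat)%R by field; lra.
lra.
Qed.
End TreeEvaluation.

Lemma median_tree_majority (d : Order.disp_t) (X : orderType d) (k : nat)
    (x : 'I_k.+1 -> X) : odd k.+1 ->
  #|tree k.+1 (2 * k.+1).+1| <
    2 * #|[pred t : tree k.+1 (2 * k.+1).+1 | eval_tree t x == medS x]|.
Proof.
move=> odd_n; set T := tree _ _; set v := medS x.
have le_dc : down_closed [pred z : X | z <= v]%O by move=> a b /= ? /le_trans; apply.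
have lt_dc : down_closed [pred z : X | z < v]%O by move=> a b /= ? /le_lt_trans; apply.
have := tree_density_gt (ltn0Sn k) (down_closed_med3_compatible le_dc)
  (medS_le_majority x odd_n).
have := tree_density_gt (ltn0Sn k) (med3_compatibleC (down_closed_med3_compatible lt_dc))
  (medS_ge_majority x odd_n).
have := card_le_nlt (fun t : T => eval_tree t x) v.
rewrite /tree_density /density -/T.
set a := #|[pred t : T | eval_tree t x <= v]%O|.
set b := #|[pred t : T | ~~ (eval_tree t x < v)%O]|.
set c := #|[pred t : T | eval_tree t x == v]|.
have Tpos : (0 < #|T|%:R :> rat)%R by rewrite ltr0n; exact: leq_trans (card_tree_ge _ _).
move/eqP; rewrite -(eqr_nat rat) !natrD => /eqP.
rewrite !ltr_pdivlMr // -(ltr_nat rat) natrM; lra.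
Qed.

Theorem mainTheorem9 (d : Order.disp_t) (X : orderType d) (k : nat) :
  odd k.+1 -> (3 <= k.+1)%N ->
  exists b : nat, (k.+1 <= b)%N /\
    forall majb : op X b, majority majb ->
      @gen_clone _ X (opset2 (@medS _ X 2) majb) k.+1 (@medS _ X k).
Proof.
move=> odd_n _; exists #|tree k.+1 (2 * k.+1).+1|; split; first exact: card_tree_ge.
move=> majb majP C C_clone C_gen.
have -> : @medS _ X k = fun x => majb (fun i => eval_tree (enum_val i) x).
  apply: functional_extensionality => x; symmetry; apply: majP.
  have half_le b c : b < 2 * c -> b.+2./2 <= c by rewrite -divn2; lia.
  rewrite (card_enum_val [pred t | eval_tree t x == medS x]).
  exact: half_le (median_tree_majority x odd_n).
have C_majb : C _ majb by apply: C_gen; right.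
have C_med3 : C 3 (@medS _ X 2) by apply: C_gen; left.
exact: C_clone.2 _ _ majb _ C_majb (fun i => eval_tree_in_clone C_clone C_med3 _).
Qed.
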